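(* Let $\mathbf{M}\in\mathbb{R}^{n\times n}$ be a constant symmetric positive definite matrix, $V\in\mathcal{C}^1(\mathbb{R}^n,\mathbb{R})$, $\tilde{\mathbf{B}}:\mathbb{R}^{2n+m}\to\mathbb{R}^{n\times p}$, and $\mathbf{g}:\mathbb{R}^n\to\mathbb{R}^m$ a map each of whose components is a polynomial of degree at most two, with Jacobian $\nabla\mathbf{g}(\mathbf{q})\in\mathbb{R}^{m\times n}$. Let $h>0$ and let $(\mathbf{q}^k,\mathbf{v}^k,\boldsymbol{\lambda}^k)_{k=0}^{N}$ and inputs $(\mathbf{u}^{k+1/2})_{k=0}^{N-1}$ satisfy, for every $n=0,\dots,N-1$, with $\square^{n+1/2}:=\tfrac12(\square^{n+1}+\square^n)$ and $\mathbf{x}^{n+1/2}=(\mathbf{q}^{n+1/2},\mathbf{v}^{n+1/2},\boldsymbol{\lambda}^{n+1/2})$, $$\mathbf{q}^{n+1}-\mathbf{q}^n=h\,\mathbf{v}^{n+1/2},$$ $$\mathbf{M}(\mathbf{v}^{n+1}-\mathbf{v}^n)=-h\,\nabla V(\mathbf{q}^{n+1/2})-h\,\nabla\mathbf{g}(\mathbf{q}^{n+1/2})^\top\boldsymbol{\lambda}^{n+1/2}+h\,\tilde{\mathbf{B}}(\mathbf{x}^{n+1/2})\mathbf{u}^{n+1/2},$$ $$\mathbf{0}=h\,\nabla\mathbf{g}(\mathbf{q}^{n+1/2})\mathbf{v}^{n+1/2}.$$ If $\mathbf{g}(\mathbf{q}^0)=\mathbf{0}$, then $\mathbf{g}(\mathbf{q}^n)=\mathbf{0}$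 for all $n=0,\dots,N$. *)

From HB Require Import structures.
From mathcomp Require Import all_boot all_order all_algebra.
From mathcomp Require Import all_classical all_reals all_analysis.
Set Implicit Arguments. Unset Strict Implicit. Unset Printing Implicit Defensive.
Import Order.TTheory GRing.Theory Num.Theory.
Import numFieldNormedType.Exports.
Local Open Scope ring_scope.

Definition gradD (R : realType) (n : nat) (f : 'cV[R]_n -> R) (q : 'cV[R]_n)
  : 'cV[R]_n := \col_(i < n) ('D_(delta_mx i ord0) f q).

Definition jacobianD (R : realType) (n m : nat) (g : 'cV[R]_n -> 'cV[R]_m)
  (q : 'cV[R]_n) : 'M[R]_(m, n) :=
  \matrix_(i < m, j < n) ('D_(delta_mx j ord0) (fun x => g x i ord0) q).

Definition quadratic_map (R : realType) (n m : nat) (g : 'cV[R]_n -> 'cV[R]_m) :=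
  exists (c : 'cV[R]_m) (B : 'M[R]_(m, n)) (A : 'I_m -> 'M[R]_n),
    forall q i, g q i ord0 = c i ord0 + (B *m q) i ord0 + (q^T *m A i *m q) ord0 ord0.

Definition spd (R : realType) (n : nat) (M : 'M[R]_n) :=
  M^T = M /\ forall x : 'cV[R]_n, x != 0 -> 0 < (x^T *m M *m x) ord0 ord0.

Definition mid (R : realType) (V : lmodType R) (x : nat -> V) (k : nat) : V :=
  (2%:R^-1 : R) *: (x k.+1 + x k).

From HB Require Import structures.
From mathcomp Require Import all_boot all_order all_algebra.
From mathcomp Require Import all_classical all_reals all_analysis.
From mathcomp Require Import ring.
Set Implicit Arguments.
Unset Strict Implicit.
Unset Printing Implicit Defensive.

Import Order.TTheory GRing.Theory Num.Theory.
Import numFieldNormedType.Exports.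
Local Open Scope ring_scope.

(** The constraint drift g(q^{k+1}) - g(q^k) vanishes because the midpoint
    rule is exact for quadratic polynomials: restricted to the segment from z to
    y, a polynomial P of degree at most two is a quadratic in the parameter, so
    P y - P z equals its directional derivative at the midpoint (y + z)/2 in the
    direction y - z.  Applied to the components of g this gives
    g(q^{k+1}) - g(q^k) = dg(q^{k+1/2}) (q^{k+1} - q^k) = h dg(q^{k+1/2}) v^{k+1/2},
    which is zero by the discrete tangency constraint; induction on k concludes. *)

Section QuadraticPolynomial.
Variables (R : comPzRingType) (n : nat) (c : R) (w : 'rV[R]_n) (A : 'M[R]_n).

Definition quad_poly (y : 'cV[R]_n) : R := c + (w *m y) 0 0 + (y^T *m A *m y) 0 0.

Definition quad_poly_grad (x : 'cV[R]_n) : 'rV[R]_n := w + x^T *m (A + A^T).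

Lemma quad_poly_along_line (t : R) (e x : 'cV[R]_n) :
  quad_poly (t *: e + x) =
  quad_poly x + t * (quad_poly_grad x *m e) 0 0 + t ^+ 2 * (e^T *m A *m e) 0 0.
Proof.
have tr_form (y z : 'cV[R]_n) : \tr (y^T *m A^T *m z) = \tr (z^T *m A *m y).
  by rewrite -[LHS]mxtrace_tr !trmx_mul !trmxK mulmxA.
rewrite /quad_poly /quad_poly_grad [_^T]linearD /= [_^T]linearZ /=.
rewrite !(mulmxDl, mulmxDr) -!(scalemxAl, scalemxAr).
rewrite -!trace_mx11 !(mxtraceD, mxtraceZ) tr_form.
ring.
Qed.
End QuadraticPolynomial.

Lemma quad_poly_midpoint (R : numFieldType) (n : nat) (c : R) (w : 'rV[R]_n)
    (A : 'M[R]_n) (y z : 'cV[R]_n) :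
  quad_poly c w A y - quad_poly c w A z =
  (quad_poly_grad w A ((2^-1 : R) *: (y + z)) *m (y - z)) 0 0.
Proof.
have half_twice (u : 'cV[R]_n) : (2^-1 : R) *: (u + u) = u.
  by rewrite -mulr2n -[u *+ 2]scaler_nat scalerA mulVf ?pnatr_eq0 // scale1r.
have y_half : (2^-1 : R) *: (y - z) + 2^-1 *: (y + z) = y.
  by rewrite -scalerDr addrACA addNr addr0 half_twice.
have z_half : - (2^-1 : R) *: (y - z) + 2^-1 *: (y + z) = z.
  by rewrite scaleNr -scalerN -scalerDr opprB [y + z]addrC addrACA addNr addr0 half_twice.
rewrite -[in quad_poly _ _ _ y]y_half -[in quad_poly _ _ _ z]z_half !quad_poly_along_line.
by field.
Qed.

Lemma derive_line_quadratic (R : realType) (V W : normedModType R)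
    (f : V -> W) (x e : V) (a b : W) :
  (forall t : R, f (t *: e + x) = f x + t *: a + t ^+ 2 *: b) ->
  'D_e f x = a.
Proof.
move=> f_line; apply: cvg_lim => //.
apply: (@cvg_trans _ ((fun t : R => a + t *: b) @ 0^')%classic).
  apply: near_eq_cvg; near=> t.
  have t0 : t != 0 by near: t; exact: nbhs_dnbhs_neq.
  rewrite /= f_line addrAC [f x + _]addrC addrK scalerDr !scalerA mulVf // scale1r.
  by rewrite expr2 mulrA mulVf // mul1r.
have lim0 : ((fun t : R => a + t *: b) @ 0 --> (a + 0 *: b : W))%classic.
  exact: cvgD (cvg_cst a) (cvgZ cvg_id (cvg_cst b)).
rewrite scale0r addr0 in lim0.
exact: cvg_within_filter lim0.
Unshelve. all: end_near.
Qed.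

Lemma derive_quad_poly (R : realType) (n : nat) (c : R) (w : 'rV[R]_n)
    (A : 'M[R]_n) (x e : 'cV[R]_n) :
  'D_e (quad_poly c w A) x = (quad_poly_grad w A x *m e) 0 0.
Proof. by apply: derive_line_quadratic => t; exact: quad_poly_along_line. Qed.

Lemma quadratic_map_components (R : realType) (n m : nat) (g : 'cV[R]_n -> 'cV[R]_m) :
  quadratic_map g -> exists (c : 'cV[R]_m) (B : 'M[R]_(m, n)) (A : 'I_m -> 'M[R]_n),
    forall i, (fun y => g y i 0) = quad_poly (c i 0) (row i B) (A i).
Proof.
case=> c [B [A gE]]; exists c, B, A => i; apply/funext => y.
by rewrite gE /quad_poly -row_mul [(row i _) 0 0]mxE.
Qed.

Lemma row_jacobianD_quad_poly (R : realType) (n m : nat) (g : 'cV[R]_n -> 'cV[R]_m)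
    (c : 'cV[R]_m) (B : 'M[R]_(m, n)) (A : 'I_m -> 'M[R]_n) (x : 'cV[R]_n) (i : 'I_m) :
  (fun y => g y i 0) = quad_poly (c i 0) (row i B) (A i) ->
  row i (jacobianD g x) = quad_poly_grad (row i B) (A i) x.
Proof.
move=> gE; apply/rowP => j.
rewrite [LHS]mxE [LHS]mxE.
transitivity ('D_(delta_mx j 0) (quad_poly (c i 0) (row i B) (A i)) x); first by rewrite -gE.
by rewrite derive_quad_poly -colE mxE.
Qed.

Lemma jacobianD_midpoint_increment (R : realType) (n m : nat) (g : 'cV[R]_n -> 'cV[R]_m)
    (y z : 'cV[R]_n) :
  quadratic_map g ->
  jacobianD g ((2^-1 : R) *: (y + z)) *m (y - z) = g y - g z.
Proof.
move=> /quadratic_map_components [c [B [A gE]]]; apply/colP => i.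
transitivity ((row i (jacobianD g ((2^-1 : R) *: (y + z))) *m (y - z)) 0 0).
  by rewrite -row_mul [RHS]mxE.
by rewrite (row_jacobianD_quad_poly _ (gE i)) -(quad_poly_midpoint (c i 0)) -(gE i) !mxE.
Qed.

Theorem mainTheorem3 (R : realType) (n m p : nat)
  (M : 'M[R]_n) (V : 'cV[R]_n -> R)
  (Bt : 'cV[R]_(n + n + m) -> 'M[R]_(n, p))
  (g : 'cV[R]_n -> 'cV[R]_m)
  (h : R) (N : nat)
  (q v : nat -> 'cV[R]_n) (lam : nat -> 'cV[R]_m) (u : nat -> 'cV[R]_p) :
  spd M ->
  (forall x, differentiable V x) -> continuous (gradD V) ->
  quadratic_map g ->
  0 < h ->
  (forall k, (k < N)%N ->
     [/\ q k.+1 - q k = h *: mid v k,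
         M *m (v k.+1 - v k) =
           - (h *: gradD V (mid q k))
           - h *: ((jacobianD g (mid q k))^T *m mid lam k)
           + h *: (Bt (col_mx (col_mx (mid q k) (mid v k)) (mid lam k)) *m u k)
       & 0 = h *: (jacobianD g (mid q k) *m mid v k)]) ->
  g (q 0%N) = 0 ->
  forall k, (k <= N)%N -> g (q k) = 0.
Proof.
move=> _ _ _ g_quad _ scheme g0.
have g_step k : (k < N)%N -> g (q k.+1) = g (q k).
  move=> /scheme [dq _ tangent]; apply/eqP; rewrite -subr_eq0.
  by rewrite -(jacobianD_midpoint_increment _ _ g_quad) -/(mid q k) dq -scalemxAr -tangent.
elim=> [|k IH] lekN //.
by rewrite g_step // IH // ltnW.
Qed.
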